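(* Let $\mathcal D$ be universal and let $m\in\mathcal D$ with $m>0$. Suppose the set $S=\{r\in\mathcal D: r^{+}>m+r\}$ is nonempty. Then $s:=\min S$ is a jump number, i.e. $s^{+}>2s$.
   Context: $\mathcal D$ denotes a finite subset of $\mathbb R_{\ge0}$ with $0\in\mathcal D$; it is universal if there is a countable homogeneous metric space with distance set exactly $\mathcal D$ into which every finite metric space with distances in $\mathcal D$ embeds isometrically (homogeneous: every isometry between finite subspaces extends to an isometry of the space onto itself). For $r\in\mathcal D$ with $r<\max\mathcal D$, $r^{+}$ is the smallest element of $\mathcal D$ larger than $r$; for $r=\max\mathcal D$, $r^{+}=r$. *)

From Stdlib Require Import Reals List.
Import ListNotations.
Open Scope R_scope.

(* A finite distance set D is represented by a list of reals. *)

(* r^+ : the smallest element of D strictly larger than r, or r itself if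
   there is none (in particular r^+ = r for r = max D). *)
Definition succ (D : list R) (r : R) : R :=
  fold_right (fun x acc =>
    if Rlt_dec r x then (if Rlt_dec r acc then Rmin x acc else x) else acc) r D.

Definition is_metric {X : Type} (d : X -> X -> R) : Prop :=
  (forall x y, d x y = 0 <-> x = y) /\
  (forall x y, d x y = d y x) /\
  (forall x y z, d x z <= d x y + d y z).

Definition countable_type (X : Type) : Prop :=
  exists f : X -> nat, forall x y, f x = f y -> x = y.

Definition distance_set_is {X : Type} (d : X -> X -> R) (D : list R) : Prop :=
  (forall x y, In (d x y) D) /\ (forall r, In r D -> exists x y, d x y = r).

(* Homogeneity: every isometry between finite subspaces (given as a finite
   list of points xs mapped pointwise to ys) extends to an isometry of X
   onto itself. *)
Definition homogeneous {X : Type} (d : X -> X -> R) : Prop :=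
  forall (xs ys : list X) (x0 : X),
    length xs = length ys ->
    (forall i j, (i < length xs)%nat -> (j < length xs)%nat ->
       d (nth i ys x0) (nth j ys x0) = d (nth i xs x0) (nth j xs x0)) ->
    exists g : X -> X,
      (forall x y, d (g x) (g y) = d x y) /\
      (forall y, exists x, g x = y) /\
      (forall i, (i < length xs)%nat -> g (nth i xs x0) = nth i ys x0).

Definition finite_metric_in (n : nat) (dY : nat -> nat -> R) (D : list R) : Prop :=
  (forall i j, (i < n)%nat -> (j < n)%nat -> (dY i j = 0 <-> i = j)) /\
  (forall i j, (i < n)%nat -> (j < n)%nat -> dY i j = dY j i) /\
  (forall i j k, (i < n)%nat -> (j < n)%nat -> (k < n)%nat ->
     dY i k <= dY i j + dY j k) /\
  (forall i j, (i < n)%nat -> (j < n)%nat -> In (dY i j) D).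

Definition universal (D : list R) : Prop :=
  exists (X : Type) (d : X -> X -> R),
    is_metric d /\ countable_type X /\ distance_set_is d D /\ homogeneous d /\
    (forall (n : nat) (dY : nat -> nat -> R), finite_metric_in n dY D ->
       exists f : nat -> X, forall i j, (i < n)%nat -> (j < n)%nat ->
         d (f i) (f j) = dY i j).

(** Suppose [s^+ <= 2s] and put [t = s^+].  Let [x] be the largest distance
    below [t - s]; since [m < t - s] we have [m <= x < s], and minimality of
    [s] gives [t - s <= x^+ <= m + x <= 2x].  So a universal space contains
    points [a, c, e] with [d(a,c) = x^+], [d(c,e) = s], [d(a,e) = t], and by
    homogeneity a point [b] with [d(a,b) = d(c,b) = x].  The distance
    [z = d(b,e)] then satisfies [s < t - x <= z <= x + s < t], i.e. it lies in
    the gap between [s] and [s^+]. *)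
From Stdlib Require Import Reals List Lra Lia.
Import ListNotations.
Open Scope R_scope.

Lemma succ_cases (D : list R) (r : R) :
  (succ D r = r /\ forall x, In x D -> x <= r) \/
  (r < succ D r /\ In (succ D r) D /\ forall x, In x D -> r < x -> succ D r <= x).
Proof.
  induction D as [|a l IH]; [left; split; [reflexivity | intros x []]|].
  change (succ (a :: l) r) with
    (if Rlt_dec r a then (if Rlt_dec r (succ l r) then Rmin a (succ l r) else a)
     else succ l r).
  destruct (Rlt_dec r a) as [Ha|Ha]; [destruct (Rlt_dec r (succ l r)) as [Hs|Hs]|].
  - destruct IH as [[E _]|[_ [Hin Hleast]]]; [lra|].
    right; unfold Rmin; destruct (Rle_dec a (succ l r)).
    + split; [lra | split; [left; reflexivity|]].
      intros x [<-|Hx] Hrx; [lra|]. specialize (Hleast x Hx Hrx); lra.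
    + split; [lra | split; [right; assumption|]].
      intros x [<-|Hx] Hrx; [lra | auto].
  - right; split; [lra | split; [left; reflexivity|]].
    intros x [<-|Hx] Hrx; [lra|].
    destruct IH as [[_ Hle]|[Hlt _]]; [specialize (Hle x Hx) | ]; lra.
  - destruct IH as [[E Hle]|[Hlt [Hin Hleast]]].
    + left; split; [assumption|]. intros x [<-|Hx]; [lra | auto].
    + right; split; [assumption | split; [right; assumption|]].
      intros x [<-|Hx] Hrx; [lra | auto].
Qed.

Lemma succ_gt (D : list R) (r y : R) : In y D -> r < y -> r < succ D r.
Proof.
  intros Hy Hry; destruct (succ_cases D r) as [[_ Hle]|[Hlt _]]; [|exact Hlt].
  specialize (Hle y Hy); lra.
Qed.

Lemma In_succ (D : list R) (r : R) : r < succ D r -> In (succ D r) D.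
Proof. destruct (succ_cases D r) as [[E _]|[_ [Hin _]]]; [lra | auto]. Qed.

Lemma succ_least (D : list R) (r x : R) : In x D -> r < x -> succ D r <= x.
Proof.
  intros Hx Hrx; destruct (succ_cases D r) as [[_ Hle]|[_ [_ Hleast]]]; auto.
  specialize (Hle x Hx); lra.
Qed.

Lemma max_below_cases (l : list R) (c : R) :
  (forall y, In y l -> c <= y) \/
  exists x, In x l /\ x < c /\ forall y, In y l -> y < c -> y <= x.
Proof.
  induction l as [|a l IH]; [left; intros y []|].
  destruct (Rlt_dec a c) as [Ha|Ha]; destruct IH as [Hge|[x [Hx [Hxc Hmax]]]].
  - right; exists a; split; [left; reflexivity | split; [exact Ha|]].
    intros y [<-|Hy] Hyc; [lra|]. specialize (Hge y Hy); lra.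
  - right; destruct (Rle_dec a x).
    + exists x; split; [right; exact Hx | split; [exact Hxc|]].
      intros y [<-|Hy] Hyc; auto.
    + exists a; split; [left; reflexivity | split; [exact Ha|]].
      intros y [<-|Hy] Hyc; [lra|]. specialize (Hmax y Hy Hyc); lra.
  - left; intros y [<-|Hy]; [lra | auto].
  - right; exists x; split; [right; exact Hx | split; [exact Hxc|]].
    intros y [<-|Hy] Hyc; [lra | auto].
Qed.

Lemma exists_max_below (l : list R) (c y : R) : In y l -> y < c ->
  exists x, In x l /\ x < c /\ forall y, In y l -> y < c -> y <= x.
Proof.
  intros Hy Hyc; destruct (max_below_cases l c) as [Hge|Hmax]; [|exact Hmax].
  specialize (Hge y Hy); lra.
Qed.

Definition is_triangle (p q r : R) : Prop :=
  0 < p /\ 0 < q /\ 0 < r /\ p <= q + r /\ q <= p + r /\ r <= p + q.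

Definition triangle_metric (p q r : R) (i j : nat) : R :=
  match i, j with
  | 0%nat, 1%nat | 1%nat, 0%nat => p
  | 1%nat, 2%nat | 2%nat, 1%nat => q
  | 0%nat, 2%nat | 2%nat, 0%nat => r
  | _, _ => 0
  end.

Lemma finite_metric_triangle (D : list R) (p q r : R) :
  In 0 D -> In p D -> In q D -> In r D -> is_triangle p q r ->
  finite_metric_in 3 (triangle_metric p q r) D.
Proof.
  intros H0 Hp Hq Hr (p0 & q0 & r0 & t1 & t2 & t3).
  split; [|split; [|split]]; intros i j; [| |intros k|];
    intros Hi Hj; try intros Hk;
    destruct i as [|[|[|i]]]; try lia; destruct j as [|[|[|j]]]; try lia;
    try (destruct k as [|[|[|k]]]; try lia);
    simpl; auto; try lra; split; intro; solve [lra | discriminate | reflexivity].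
Qed.

Section UniversalSpace.

Variables (X : Type) (d : X -> X -> R) (D : list R).
Hypothesis d_metric : is_metric d.
Hypothesis d_homogeneous : homogeneous d.
Hypothesis d_in_D : forall x y, In (d x y) D.
Hypothesis d_embeds : forall (n : nat) (dY : nat -> nat -> R),
  finite_metric_in n dY D ->
  exists f : nat -> X, forall i j, (i < n)%nat -> (j < n)%nat -> d (f i) (f j) = dY i j.
Hypothesis D0 : In 0 D.

Lemma realize_triangle (p q r : R) :
  In p D -> In q D -> In r D -> is_triangle p q r ->
  exists a c e, d a c = p /\ d c e = q /\ d a e = r.
Proof.
  intros Hp Hq Hr Htri.
  destruct (d_embeds 3 (triangle_metric p q r)) as [f Hf];
    [exact (finite_metric_triangle D p q r D0 Hp Hq Hr Htri)|].
  exists (f 0%nat), (f 1%nat), (f 2%nat); rewrite !Hf by lia; auto.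
Qed.

(* Realize the triangle somewhere, then move its edge onto [(a, c)] by
   homogeneity. *)
Lemma extend_edge (a c : X) (q r : R) :
  In q D -> In r D -> is_triangle (d a c) q r ->
  exists b, d c b = q /\ d a b = r.
Proof.
  intros Hq Hr Htri.
  destruct (realize_triangle (d a c) q r (d_in_D a c) Hq Hr Htri)
    as (a' & c' & e' & Ha'c' & Hc'e' & Ha'e').
  destruct d_metric as [Hd0 [Hsym _]].
  assert (Hdxx : forall x, d x x = 0) by (intro; apply Hd0; reflexivity).
  destruct (d_homogeneous [a'; c'] [a; c] a) as [g [Hg [_ Hgf]]]; [reflexivity| |].
  - intros i j Hi Hj; simpl in Hi, Hj.
    destruct i as [|[|i]]; try lia; destruct j as [|[|j]]; try lia; simpl;
      rewrite ?Hdxx, ?(Hsym c a), ?(Hsym c' a'); congruence.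
  - exists (g e').
    pose proof (Hgf 0%nat ltac:(simpl; lia)) as Ha; simpl in Ha.
    pose proof (Hgf 1%nat ltac:(simpl; lia)) as Hc; simpl in Hc.
    rewrite <- Ha, <- Hc, !Hg; auto.
Qed.

Lemma amalgamate_triangles (p s t x x' : R) :
  In p D -> In s D -> In t D -> In x D -> In x' D ->
  is_triangle p s t -> is_triangle p x' x ->
  exists z, In z D /\ t <= x + z /\ z <= x' + s.
Proof.
  intros Hp Hs Ht Hx Hx' Hst Hxx'.
  destruct (realize_triangle p s t Hp Hs Ht Hst) as (a & c & e & Hac & Hce & Hae).
  subst p; destruct (extend_edge a c x' x Hx' Hx Hxx') as (b & Hcb & Hab).
  destruct d_metric as [_ [Hsym Htri]].
  exists (d b e); split; [apply d_in_D|].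
  pose proof (Htri a b e); pose proof (Htri b c e); rewrite (Hsym b c) in *; lra.
Qed.

End UniversalSpace.

Theorem lemma3p1 (D : list R)
  (H0 : In 0 D) (Hnn : forall x, In x D -> 0 <= x)
  (HU : universal D)
  (m : R) (Hm : In m D) (Hmpos : 0 < m)
  (s : R) (Hs : In s D /\ succ D s > m + s)
  (Hsmin : forall r, In r D -> succ D r > m + r -> s <= r) :
  succ D s > 2 * s.
Proof.
  destruct Hs as [HsD Hts]; set (t := succ D s) in *.
  apply Rnot_le_gt; intro Ht2.
  assert (HtD : In t D) by (apply In_succ; fold t; lra).
  destruct (exists_max_below D (t - s) m Hm ltac:(lra)) as (x & HxD & Hxt & Hxmax).
  assert (Hmx : m <= x) by (apply Hxmax; auto; lra).
  set (c := succ D x).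
  assert (Hxc : x < c) by (apply (succ_gt D x s); auto; lra).
  assert (HcD : In c D) by (apply In_succ; exact Hxc).
  assert (Hcs : c <= s) by (apply succ_least; auto; lra).
  assert (Htc : t - s <= c)
    by (apply Rnot_lt_le; intro; specialize (Hxmax c HcD ltac:(lra)); lra).
  assert (Hcm : c <= m + x)
    by (apply Rnot_lt_le; intro; specialize (Hsmin x HxD ltac:(fold c; lra)); lra).
  destruct HU as (X & d & Hmetric & _ & [HdD _] & Hhom & Hemb).
  destruct (amalgamate_triangles X d D Hmetric Hhom HdD Hemb H0 c s t x x)
    as (z & HzD & Hxz & Hzs); auto; try (repeat split; lra).
  assert (t <= z) by (apply succ_least; auto; lra); lra.
Qed.
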